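(* Let $V$ be a $\mathcal{T}$-module such that the restriction of $V$ to $\mathcal{U}(\mathfrak{h})$, where $\mathfrak{h}=\mathbb{C}L_0\oplus\mathbb{C}G_0$, is free of rank $1$. Then there exist $\lambda\in\mathbb{C}^*$ and $\alpha\in\mathbb{C}$ such that $V$ or $\Pi(V)$ is isomorphic to $\mathcal{M}_1(\lambda,\alpha)$ or to $\mathcal{M}_{-1}(\lambda,\alpha)$.
   Context: The twisted $N=2$ superconformal algebra $\mathcal{T}$ is the Lie superalgebra over $\mathbb{C}$ with basis $\{L_m, I_r, G_p\mid m\in\mathbb{Z}, r\in\frac12+\mathbb{Z}, p\in\frac12\mathbb{Z}\}$, even part spanned by the $L_m,I_r$, odd part by the $G_p$, only nonzero brackets $[L_m,L_n]=(m-n)L_{m+n}$, $[L_m,I_r]=-rI_{m+r}$, $[L_m,G_p]=(\frac m2-p)G_{m+p}$, $[I_r,G_p]=G_{r+p}$, $[G_p,G_q]=(-1)^{2p}2L_{p+q}$ if $p+q\in\mathbb{Z}$, $[G_p,G_q]=(-1)^{2p+1}(p-q)I_{p+q}$ if $p+q\in\frac12+\mathbb{Z}$. Modules are $\mathbb{Z}_2$-graded; $\Pi$ is the parity-change functor. For $p\in\frac12\mathbb{Z}$, $\lambda^p$ means $(\lambda^{1/2})^{2p}$ for a fixed square root. For $\lambda\in\mathbb{C}^*,\alpha\in\mathbb{C},t=\pm1$, $\mathcal{M}_t(\lambda,\alpha)$ is the space $\mathbb{C}[\partial^2]\oplus\partial\mathbb{C}[\partial^2]$ ($\partial$ a formal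 variable; even part $\mathbb{C}[\partial^2]$, odd part $\partial\mathbb{C}[\partial^2]$) with action ($m\in\mathbb{Z}$, $r\in\frac12+\mathbb{Z}$, $p\in\frac12\mathbb{Z}$): $L_mf(\partial^2)=\lambda^m(\partial^2+m\alpha)f(\partial^2+m)$, $L_m\partial f(\partial^2)=\lambda^m(\partial^2+m(\alpha+\frac12))\partial f(\partial^2+m)$, $I_rf(\partial^2)=-2t^{2r}\lambda^{r}\alpha f(\partial^2+r)$, $I_r\partial f(\partial^2)=t^{2r}\lambda^{r}(1-2\alpha)\partial f(\partial^2+r)$, $G_pf(\partial^2)=t^{2p}\lambda^p\partial f(\partial^2+p)$, $G_p\partial f(\partial^2)=(-t)^{2p}\lambda^p(\partial^2+2p\alpha)f(\partial^2+p)$. *)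

From HB Require Import structures.
From mathcomp Require Import all_boot all_order all_algebra.
From mathcomp Require Import reals complex.
Set Implicit Arguments. Unset Strict Implicit. Unset Printing Implicit Defensive.
Import Order.TTheory GRing.Theory Num.Theory.
Local Open Scope ring_scope.

(* Index encoding:
   L_m    <-> L m          (m : int)
   I_r    <-> I k          with r = k + 1/2   (k : int)
   G_p    <-> G j          with p = j / 2     (j : int)
   A module V = V0 (+) V1 (even/odd part) is given by the restrictions of the
   operators to each homogeneous component: L,I preserve parity, G swaps it. *)

Section Rels.
Variable F : fieldType.

(* All bracket relations of T, applied to vectors of the component U
   (U = V0 or V1, W = the other component).  Supercommutators:
   [even,even], [even,odd] are commutators, [odd,odd] anticommutators. *)
Definition side_rels (U W : lmodType F)
  (L : int -> {linear U -> U}) (L' : int -> {linear W -> W})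
  (I : int -> {linear U -> U}) (I' : int -> {linear W -> W})
  (G : int -> {linear U -> W}) (G' : int -> {linear W -> U}) : Prop :=
  (
      forall (m n : int) (x : U),
        L m (L n x) - L n (L m x) = (m - n)%:~R *: L (m + n) x) /\ (
      (* [L_m, I_r] = -r I_{m+r},  r = k + 1/2 *)
      forall (m k : int) (x : U),
        L m (I k (x)) - I k (L m x) = - ((2 * k + 1)%:~R / 2) *: I (m + k) x) /\ (
      (* [L_m, G_p] = (m/2 - p) G_{m+p},  p = j/2 *)
      forall (m j : int) (x : U),
        L' m (G j x) - G j (L m x) = ((m - j)%:~R / 2) *: G (2 * m + j) x) /\ (
      forall (k l : int) (x : U), I k (I l x) = I l (I k x)) /\ (
      (* [I_r, G_p] = G_{r+p} *)
      forall (k j : int) (x : U),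
        I' k (G j x) - G j (I k x) = G (2 * k + 1 + j) x) /\ (
      (* [G_p, G_q] = (-1)^{2p} 2 L_{p+q}  if p+q in Z *)
      forall (j l n : int) (x : U), j + l = 2 * n ->
        G' j (G l x) + G' l (G j x) = ((-1) ^ j * 2) *: L n x) /\ (
      (* [G_p, G_q] = (-1)^{2p+1} (p-q) I_{p+q}  if p+q in 1/2+Z *)
      forall (j l k : int) (x : U), j + l = 2 * k + 1 ->
        G' j (G l x) + G' l (G j x) = ((-1) ^ (j + 1) * ((j - l)%:~R / 2)) *: I k x).

Record tmodule := TModule {
  tV0 : lmodType F;
  tV1 : lmodType F;
  tL0 : int -> {linear tV0 -> tV0};
  tL1 : int -> {linear tV1 -> tV1};
  tI0 : int -> {linear tV0 -> tV0};
  tI1 : int -> {linear tV1 -> tV1};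
  tG01 : int -> {linear tV0 -> tV1};
  tG10 : int -> {linear tV1 -> tV0};
  trels0 : side_rels tL0 tL1 tI0 tI1 tG01 tG10;
  trels1 : side_rels tL1 tL0 tI1 tI0 tG10 tG01 }.

Definition Pi (V : tmodule) : tmodule :=
  @TModule (tV1 V) (tV0 V) (tL1 V) (tL0 V) (tI1 V) (tI0 V) (tG10 V) (tG01 V)
    (trels1 V) (trels0 V).

Definition polyact (U : lmodType F) (f : U -> U) (p : {poly F}) (v : U) : U :=
  \sum_(i < size p) p`_i *: iter i f v.

(* U(h), h = C L_0 + C G_0, has basis L_0^n, G_0 L_0^n (n >= 0).
   V is U(h)-free of rank 1 with an even generator v: the vectors L_0^n v
   form a basis of V0 and the vectors G_0 L_0^n v form a basis of V1. *)
Definition Uh_free1_even (V : tmodule) : Prop :=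
  exists v : tV0 V,
    bijective (fun p : {poly F} => polyact (tL0 V 0) p v) /\
    bijective (fun p : {poly F} => tG01 V 0 (polyact (tL0 V 0) p v)).

(* Free of rank 1 (generator homogeneous, even or odd). *)
Definition Uh_free1 (V : tmodule) : Prop := Uh_free1_even V \/ Uh_free1_even (Pi V).

End Rels.

Section Mt.
Variable C : numClosedFieldType.

(* lambda^p := (lambda^{1/2})^{2p}, with the fixed square root sqrtC; k = 2p. *)
Definition lpow (lam : C) (k : int) : C := (sqrtC lam) ^ k.
Definition half (k : int) : C := k%:~R / 2.
Definition shift (f : {poly C}) (c : C) : {poly C} := f \Po ('X + c%:P).

(* M_t(lambda, alpha): even part C[d^2] ~ {poly C} (f <-> f(d^2)),
   odd part d C[d^2] ~ {poly C} (f <-> d f(d^2)). *)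
Definition ML0 (lam al : C) (m : int) (f : {poly C}) : {poly C} :=
  lpow lam (2 * m) *: (('X + (m%:~R * al)%:P) * shift f m%:~R).
Definition ML1 (lam al : C) (m : int) (f : {poly C}) : {poly C} :=
  lpow lam (2 * m) *: (('X + (m%:~R * (al + 2^-1))%:P) * shift f m%:~R).
Definition MI0 (t lam al : C) (k : int) (f : {poly C}) : {poly C} :=
  (- 2 * t ^ (2 * k + 1) * lpow lam (2 * k + 1) * al) *: shift f (half (2 * k + 1)).
Definition MI1 (t lam al : C) (k : int) (f : {poly C}) : {poly C} :=
  (t ^ (2 * k + 1) * lpow lam (2 * k + 1) * (1 - 2 * al)) *: shift f (half (2 * k + 1)).
Definition MG01 (t lam : C) (j : int) (f : {poly C}) : {poly C} :=
  (t ^ j * lpow lam j) *: shift f (half j).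
Definition MG10 (t lam al : C) (j : int) (f : {poly C}) : {poly C} :=
  ((- t) ^ j * lpow lam j) *: (('X + (j%:~R * al)%:P) * shift f (half j)).

Definition iso_Mt (V : tmodule C) (t lam al : C) : Prop :=
  exists (f0 : {linear tV0 V -> {poly C}}) (f1 : {linear tV1 V -> {poly C}}),
    [/\ bijective f0, bijective f1,
        forall m x, f0 (tL0 V m x) = ML0 lam al m (f0 x),
        forall m x, f1 (tL1 V m x) = ML1 lam al m (f1 x) &
      [/\ forall k x, f0 (tI0 V k x) = MI0 t lam al k (f0 x),
        forall k x, f1 (tI1 V k x) = MI1 t lam al k (f1 x),
        forall j x, f1 (tG01 V j x) = MG01 t lam j (f0 x) &
        forall j x, f0 (tG10 V j x) = MG10 t lam al j (f1 x)]].

End Mt.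

(* Identify V0 and V1 with C[x] through p |-> p(L_0) v and p |-> p(L_0) G_0 v,
   where v is the (even, after a parity change) free generator.  An operator X
   with [L_0, X] = -c X then acts by p |-> p(x + c) q_X, where q_X is the
   coordinate of X applied to the generator; so V is encoded by the polynomials
   of the G_p, L_m and I_r.  The relations [G_p, G_{-p}] = 2 (-1)^{2p} L_0 force
   every product g_{-p}(x + p) h_p to be linear, so all g_p = G_p v and
   h_p = G_p G_0 v have degree at most one.  Comparing coefficients in the other
   [G, G] and [I, G] relations gives g_p = γ^{2p} and
   h_p = (-1)^{2p} γ^{2p} (x + 2pα), after which [G_0, G_p] yields the L_m and
   I_r.  Writing γ = ±√λ identifies V with M_{±1}(λ, α). *)

From Pilot Require Import Defs.
From HB Require Import structures.
From mathcomp Require Import all_boot all_order all_algebra.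
From mathcomp Require Import reals complex.
From mathcomp Require Import ring zify.
Import Order.TTheory GRing.Theory Num.Theory.
Set Implicit Arguments. Unset Strict Implicit. Unset Printing Implicit Defensive.
Local Open Scope ring_scope.

Section LinearCombination.
Variable R : pzRingType.

Lemma lincomb_eq1 (x y l r k : R) : x = y -> l - r = k * (x - y) -> l = r.
Proof. by move=> ->; rewrite subrr mulr0 => /subr0_eq. Qed.

Lemma lincomb_eq2 (x y x' y' l r k k' : R) : x = y -> x' = y' ->
  l - r = k * (x - y) + k' * (x' - y') -> l = r.
Proof. by move=> -> ->; rewrite !subrr !mulr0 addr0 => /subr0_eq. Qed.

Lemma lincomb_eq3 (x y x' y' x'' y'' l r k k' k'' : R) :
  x = y -> x' = y' -> x'' = y'' ->
  l - r = k * (x - y) + k' * (x' - y') + k'' * (x'' - y'') -> l = r.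
Proof. by move=> -> -> ->; rewrite !subrr !mulr0 !addr0 => /subr0_eq. Qed.

End LinearCombination.

Section Quadratic.
Variable R : comNzRingType.
Implicit Types a b c : R.

Definition quad a b c : {poly R} := a *: 'X^2 + b *: 'X + c%:P.

Lemma quad_inj a b c a' b' c' :
  quad a b c = quad a' b' c' -> [/\ a = a', b = b' & c = c'].
Proof.
move=> e; have coef_e i := congr1 (fun p : {poly R} => p`_i) e.
move: (coef_e 0%N) (coef_e 1%N) (coef_e 2%N); rewrite /quad !coefE /=.
by rewrite !mulr0 !mulr1 !addr0 !add0r.
Qed.

Lemma quadD a b c a' b' c' :
  quad a b c + quad a' b' c' = quad (a + a') (b + b') (c + c').
Proof. by rewrite /quad !scalerDl rmorphD; ring. Qed.
Lemma quadB a b c a' b' c' :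
  quad a b c - quad a' b' c' = quad (a - a') (b - b') (c - c').
Proof. by rewrite /quad !scalerBl rmorphB; ring. Qed.
Lemma quadZ k a b c : k *: quad a b c = quad (k * a) (k * b) (k * c).
Proof. by rewrite /quad !scalerDr !scalerA -!mul_polyC rmorphM; ring. Qed.
Lemma quadX : 'X = quad 0 1 0.
Proof. by rewrite /quad scale0r scale1r add0r addr0. Qed.
Lemma quadC a : a%:P = quad 0 0 a.
Proof. by rewrite /quad !scale0r !add0r. Qed.
Lemma quad1 : 1 = quad 0 0 1.
Proof. by rewrite -quadC. Qed.
Lemma quad_mul_linear a b c d :
  quad 0 a b * quad 0 c d = quad (a * c) (a * d + b * c) (b * d).
Proof. by rewrite /quad !scale0r !add0r -!mul_polyC !rmorphD !rmorphM; ring. Qed.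

Lemma quad_linear (p : {poly R}) : (size p <= 2)%N -> p = quad 0 p`_1 p`_0.
Proof.
move=> sp; apply/polyP => -[|[|i]]; rewrite /quad !coefE /=; try ring.
by rewrite nth_default ?(leq_trans sp) //; ring.
Qed.

End Quadratic.

Section Shift.
Variable C : numClosedFieldType.
Implicit Types (p q : {poly C}) (a b c d s : C).

Lemma shiftM p q s : shift (p * q) s = shift p s * shift q s.
Proof. exact: comp_polyM. Qed.
Lemma shiftD p q s : shift (p + q) s = shift p s + shift q s.
Proof. exact: comp_polyD. Qed.
Lemma shiftB p q s : shift (p - q) s = shift p s - shift q s.
Proof. exact: comp_polyB. Qed.
Lemma shiftZ a p s : shift (a *: p) s = a *: shift p s.
Proof. exact: comp_polyZ. Qed.
Lemma shiftC a s : shift a%:P s = a%:P.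
Proof. exact: comp_polyC. Qed.
Lemma shift1 s : shift 1 s = 1.
Proof. by rewrite -polyC1 shiftC. Qed.
Lemma shiftX s : shift 'X s = 'X + s%:P.
Proof. exact: comp_polyX. Qed.
Lemma shift0 p : shift p 0 = p.
Proof. by rewrite /shift addr0 comp_polyXr. Qed.

Lemma shift_shift p a c : shift (shift p a) c = shift p (a + c).
Proof.
rewrite /shift -comp_polyA comp_polyD comp_polyX comp_polyC rmorphD.
by congr (_ \Po _); ring.
Qed.

Lemma shiftK p s : shift (shift p s) (- s) = p.
Proof. by rewrite shift_shift subrr shift0. Qed.

Lemma shiftNK p s : shift (shift p (- s)) s = p.
Proof. by rewrite shift_shift addNr shift0. Qed.

Lemma size_shift p s : size (shift p s) = size p.
Proof. by rewrite /shift size_comp_poly2 // size_XaddC. Qed.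

Lemma shift_quad_linear a b s : shift (quad 0 a b) s = quad 0 a (a * s + b).
Proof.
rewrite /quad !scale0r !add0r shiftD shiftZ shiftX shiftC -!mul_polyC.
by rewrite rmorphD rmorphM; ring.
Qed.

Lemma horner_shift p s x : (shift p s).[x] = p.[x + s].
Proof. by rewrite /shift horner_comp !hornerE. Qed.

(* [p] minus its linear part is [d]-periodic, hence vanishes at every [n d]. *)
Lemma const_difference_linear p d c : d != 0 -> shift p d - p = c%:P ->
  p = (c / d) *: 'X + (p.[0])%:P.
Proof.
move=> d0 hp; set q := p - ((c / d) *: 'X + (p.[0])%:P).
have q_periodic : shift q d = q.
  rewrite /q shiftB shiftD shiftZ shiftX shiftC.
  have -> : shift p d = p + c%:P by rewrite -hp addrC subrK.
  rewrite scalerDr -!mul_polyC -rmorphM.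
  by rewrite mulfVK //; ring.
have q_root n : q.[n%:R * d] = 0.
  elim: n => [|n IHn]; first by rewrite mul0r /q !hornerE; ring.
  by rewrite mulrSr mulrDl mul1r -horner_shift q_periodic.
apply/eqP; rewrite -subr_eq0 -/q; apply/eqP.
apply: (roots_geq_poly_eq0 (rs := [seq i%:R * d | i <- iota 0 (size q)])).
- by apply/allP => _ /mapP [i _ ->]; rewrite /root q_root.
- rewrite map_inj_uniq ?iota_uniq // => i j /(mulIf d0) /eqP.
  by rewrite eqr_nat => /eqP.
- by rewrite size_map size_iota.
Qed.

(* [P := shift A s * B] satisfies [P(x + s) - P(x - s) = 2 e s]: evaluate the
   first identity at [x + s] and subtract the second. *)
Lemma shift_product_linear (A B A' B' : {poly C}) s e : s != 0 ->
  shift A s * B + shift A' (- s) * B' = (e * 2) *: 'X ->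
  shift B' s * A' + shift B (- s) * A = (e * 2) *: 'X ->
  exists c, shift A s * B = e *: 'X + c%:P.
Proof.
move=> s0 hv hw; set P := shift A s * B.
have hP' : shift P (- s) = A * shift B (- s) by rewrite shiftM shiftK.
have hQ : shift (shift A' (- s) * B') s = A' * shift B' s by rewrite shiftM shiftNK.
have hPs : shift P s = (e * 2) *: ('X + s%:P) - (e * 2) *: 'X + shift P (- s).
  have : shift ((e * 2) *: 'X - P) s + shift P (- s) = (e * 2) *: 'X.
    have -> : (e * 2) *: 'X - P = shift A' (- s) * B' by rewrite -hv addrAC subrr add0r.
    by rewrite hQ hP' [A' * _]mulrC [A * _]mulrC.
  by rewrite shiftB shiftZ shiftX => <-; ring.
have hdiff : shift (shift P (- s)) (2 * s) - shift P (- s) = (e * 2 * s)%:P.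
  rewrite shift_shift (_ : - s + 2 * s = s); last by ring.
  by rewrite hPs scalerDr -!mul_polyC !rmorphM; ring.
have s2 : 2 * s != 0 by rewrite mulf_neq0 // pnatr_eq0.
have := const_difference_linear s2 hdiff; set r := _.[0] => hlin.
exists (e * s + r); rewrite -[P](shiftNK _ s) hlin shiftD shiftZ shiftX shiftC.
rewrite -[e * 2 * s]mulrA mulfK // scalerDr -!mul_polyC !rmorphD !rmorphM; ring.
Qed.

Lemma size_factors_linear p q k c : k != 0 -> p * q = k *: 'X + c%:P ->
  (size p <= 2)%N /\ (size q <= 2)%N.
Proof.
move=> k0 hpq.
have size_pq : size (p * q) = 2%N.
  by rewrite hpq -mul_polyC size_MXaddC polyC_eq0 (negbTE k0) size_polyC k0.
have p0 : p != 0 by apply: contra_eq_neq size_pq => ->; rewrite mul0r size_poly0.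
have q0 : q != 0 by apply: contra_eq_neq size_pq => ->; rewrite mulr0 size_poly0.
move: size_pq; rewrite size_mul //; rewrite -!size_poly_gt0 in p0 q0.
by case: (size p) p0 => // m _; case: (size q) q0 => // n _; rewrite addSn /=; lia.
Qed.

End Shift.

Section HalfSign.
Variable C : numClosedFieldType.
Local Notation hf := (Defs.half C).

Lemma half0 : hf 0 = 0.
Proof. by rewrite /Defs.half mul0r. Qed.
Lemma halfN j : hf (- j) = - hf j.
Proof. by rewrite /Defs.half intrN mulNr. Qed.
Lemma half_double j : hf (2 * j) = j%:~R.
Proof. by rewrite /Defs.half intrM; field. Qed.
Lemma mul2_half1 : 2 * hf 1 = 1.
Proof. by rewrite /Defs.half; field. Qed.
Lemma half_neq0 j : j != 0 -> hf j != 0.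
Proof. by move=> j0; rewrite /Defs.half mulf_neq0 ?intr_eq0 // invr_eq0 pnatr_eq0. Qed.
Lemma half_odd_neq0 k : hf (2 * k + 1) != 0.
Proof. by apply: half_neq0; lia. Qed.

Lemma signz_neq0 (j : int) : (-1 : C) ^ j != 0.
Proof. by rewrite expfz_neq0 // oppr_eq0 oner_eq0. Qed.
Lemma signzS (j : int) : (-1 : C) ^ (1 + j) = - (-1) ^ j.
Proof. by rewrite expfzDr ?oppr_eq0 ?oner_eq0 // expr1z mulN1r. Qed.
Lemma signz_even (k : int) : (-1 : C) ^ (2 * k) = 1.
Proof. by rewrite -exprz_exp (_ : _ ^ 2%:Z = 1) ?exp1rz // -exprnP sqrrN expr1n. Qed.
Lemma signz_odd (k : int) : (-1 : C) ^ (1 + 2 * k) = -1.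
Proof. by rewrite signzS signz_even. Qed.

End HalfSign.

Lemma int_ind_succ (P : int -> Prop) : P 0 ->
  (forall j, P j -> P (1 + j)) -> (forall j, P (1 + j) -> P j) -> forall j, P j.
Proof.
move=> P0 Pup Pdown; elim/int_rec => [|n IHn|n IHn] //.
  by rewrite intS; apply: Pup.
by apply: Pdown; rewrite (_ : 1 + _ = - n%:Z) // intS; ring.
Qed.

Lemma int_even_odd (j : int) : exists k, j = 2 * k \/ j = 1 + 2 * k.
Proof.
elim/int_ind_succ: j => [|j [k [->|->]]|j [k [e|e]]].
- by exists 0; left.
- by exists k; right.
- by exists (1 + k); left; ring.
- by exists (k - 1); right; rewrite -[j](addKr 1) e; ring.
- by exists k; left; rewrite -[j](addKr 1) e; ring.
Qed.

Ltac quad_norm :=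
  rewrite /= ?quadX ?quad1 ?quadC ?(shift_quad_linear, quad_mul_linear, quadZ, quadD,
    quadB, addr0, add0r, mulr0, mul0r).

Definition closed_form_G (C : numClosedFieldType) (g h : int -> {poly C}) gam al :=
  forall j, g j = (gam ^ j)%:P /\ h j = ((-1) ^ j * gam ^ j) *: ('X + (j%:~R * al)%:P).

(* [g j] and [h j] stand for the coordinates of [G_{j/2} v] and [G_{j/2} G_0 v],
   [c0] and [e0] for those of [I_{1/2} v] and [I_{1/2} G_0 v]; the hypotheses
   are the relations these satisfy (see the section [Coordinates] below). *)
Section GSystem.
Variable C : numClosedFieldType.
Variables (g h : int -> {poly C}) (c0 e0 : {poly C}).
Local Notation hf := (Defs.half C).
Local Notation sgn j := ((-1 : C) ^ (j : int)).
Hypothesis g0 : g 0 = 1.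
Hypothesis h0 : h 0 = 'X.
Hypothesis GG_opp0 : forall j,
  shift (g (- j)) (hf j) * h j + shift (g j) (hf (- j)) * h (- j) = (sgn j * 2) *: 'X.
Hypothesis GG_opp1 : forall j,
  shift (h (- j)) (hf j) * g j + shift (h j) (hf (- j)) * g (- j) = (sgn j * 2) *: 'X.
Hypothesis GG_diag0 : forall j,
  2 *: (shift (g j) (hf j) * h j) = sgn j *: (g (2 * j) * 'X + h (2 * j)).
Hypothesis GG_diag1 : forall j,
  2 *: (shift (h j) (hf j) * g j) = sgn j *: (h (2 * j) + shift 'X (hf (2 * j)) * g (2 * j)).
Hypothesis GG_odd_diag0 : forall k, let j := 1 + 2 * k in
  shift (g (- j)) (hf (2 * j)) * h (2 * j) + shift (g (2 * j)) (hf (- j)) * h (- j)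
  = (-3) *: (g j * 'X + h j).
Hypothesis IG0_succ : forall j, shift (g j) (hf 1) * e0 - shift c0 (hf j) * g j = g (1 + j).
Hypothesis IG1_succ : forall j, shift (h j) (hf 1) * c0 - shift e0 (hf j) * h j = h (1 + j).
Hypothesis c0_G : hf 1 *: c0 = g 1 * 'X + h 1.
Hypothesis e0_G : hf 1 *: e0 = h 1 + shift 'X (hf 1) * g 1.

Lemma shift_gh_linear j : exists c, shift (g (- j)) (hf j) * h j = sgn j *: 'X + c%:P.
Proof.
have [->|j0] := eqVneq j 0.
  by exists 0; rewrite oppr0 g0 h0 shift1 mul1r expr0z scale1r addr0.
by apply: shift_product_linear; rewrite -?halfN // half_neq0.
Qed.

Lemma size_gh j : (size (g j) <= 2)%N /\ (size (h j) <= 2)%N.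
Proof.
have [c hlin] := shift_gh_linear j; have [c' glin] := shift_gh_linear (- j).
have [_ ->] := size_factors_linear (signz_neq0 C j) hlin.
by have [] := size_factors_linear (signz_neq0 C (- j)) glin; rewrite opprK size_shift.
Qed.

Definition gA j := (g j)`_1.
Definition gB j := (g j)`_0.
Definition hA j := (h j)`_1.
Definition hB j := (h j)`_0.

Lemma gE j : g j = quad 0 (gA j) (gB j).
Proof. by have [+ _] := size_gh j; apply: quad_linear. Qed.
Lemma hE j : h j = quad 0 (hA j) (hB j).
Proof. by have [_] := size_gh j; apply: quad_linear. Qed.

Lemma gA0 : gA 0 = 0.
Proof. by move: g0; rewrite gE quad1 => /quad_inj[]. Qed.
Lemma gB0 : gB 0 = 1.
Proof. by move: g0; rewrite gE quad1 => /quad_inj[]. Qed.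
Lemma hB0 : hB 0 = 0.
Proof. by move: h0; rewrite hE quadX => /quad_inj[]. Qed.

Lemma coef_shift_gh j : gA (- j) * hA j = 0 /\
  gA (- j) * hB j + (gA (- j) * hf j + gB (- j)) * hA j = sgn j.
Proof.
have [c] := shift_gh_linear j; rewrite /= ?gE ?hE; quad_norm.
by case/quad_inj => e2 e1 _; split; [rewrite e2 | rewrite e1]; ring.
Qed.

Lemma gA_even i : gA (2 * i) = 0.
Proof.
have [->|i0] := eqVneq i 0; first by rewrite mulr0 gA0.
move: (GG_diag0 i) (GG_diag1 i); rewrite /= ?gE ?hE; quad_norm.
move=> /quad_inj [_ V1 _] /quad_inj [_ W1 _].
have : sgn i * i%:~R * gA (2 * i) = 0.
  by apply: (lincomb_eq2 V1 W1 (k := 1) (k' := -1)); rewrite half_double /Defs.half; field.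
by move/eqP; rewrite !mulf_eq0 (negbTE (signz_neq0 _ _)) intr_eq0 (negbTE i0) => /eqP.
Qed.

(* The [x^2]-coefficients of [GG_diag0] give [gA j * hA j = 0]; if [hA j = 0],
   the [x^2]-coefficient of [GG_odd_diag0] then forces [gA j = 0]. *)
Lemma gA_odd k : gA (1 + 2 * k) = 0.
Proof.
set j := 1 + 2 * k.
have sj : sgn j = -1 by apply: signz_odd.
have j0 : j%:~R != 0 :> C by rewrite intr_eq0 /j; lia.
move: (GG_diag0 j) (GG_diag1 j) (GG_odd_diag0 k); rewrite /= ?gE ?hE; quad_norm.
move=> /quad_inj [V2 V1 V0] /quad_inj [_ _ W0] /quad_inj [T2 _ _].
rewrite !gA_even sj in V2 V1 V0 W0 T2.
have [hAj0|hAj_neq0] := eqVneq (hA j) 0; last first.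
  have : gA j * hA j = 0 by apply: (lincomb_eq1 V2 (k := 1/2)); field.
  by move/eqP; rewrite mulf_eq0 (negbTE hAj_neq0) orbF => /eqP.
have [_ s1] := coef_shift_gh j; rewrite hAj0 sj in s1.
have e1 : gA (- j) * hB j = -1 by rewrite -s1; ring.
rewrite hAj0 in V1 V0 W0.
have e2 : gB (2 * j) = gA j * hB j.
  have : j%:~R * (gB (2 * j) - gA j * hB j) = 0.
    by apply: (lincomb_eq2 W0 V0 (k := 1) (k' := -1)); rewrite half_double /Defs.half; field.
  by move/eqP; rewrite mulf_eq0 (negbTE j0) subr_eq0 => /eqP.
have e3 : hA (2 * j) = -3 * gA j * hB j.
  by apply: (lincomb_eq2 V1 e2 (k := 1) (k' := -1)); rewrite /Defs.half; field.
have : 6 * gA j = 0.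
  apply: (lincomb_eq3 T2 e3 e1 (k := 1) (k' := - gA (- j)) (k'' := 3 * gA j)).
  by rewrite /Defs.half; field.
by move/eqP; rewrite mulf_eq0 pnatr_eq0 => /eqP.
Qed.

Lemma gA_eq0 j : gA j = 0.
Proof. by have [k [->|->]] := int_even_odd j; [apply: gA_even | apply: gA_odd]. Qed.

Lemma gB_hA j : gB (- j) * hA j = sgn j.
Proof. by have [_ <-] := coef_shift_gh j; rewrite gA_eq0; ring. Qed.

Lemma c0_quad : c0 = quad 0 (2 * (gB 1 + hA 1)) (2 * hB 1).
Proof.
have -> : c0 = 2 *: (hf 1 *: c0) by rewrite scalerA mul2_half1 scale1r.
by rewrite c0_G /= ?gE ?hE; quad_norm; rewrite !gA_eq0; congr quad; ring.
Qed.

Lemma e0_quad : e0 = quad 0 (2 * (hA 1 + gB 1)) (2 * hB 1 + gB 1).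
Proof.
have -> : e0 = 2 *: (hf 1 *: e0) by rewrite scalerA mul2_half1 scale1r.
by rewrite e0_G /= ?gE ?hE; quad_norm; rewrite !gA_eq0; congr quad; rewrite /Defs.half; field.
Qed.

Lemma gB_rec j :
  gB j * (2 * hB 1 + gB 1) - (2 * (gB 1 + hA 1) * hf j + 2 * hB 1) * gB j = gB (1 + j).
Proof.
move: (IG0_succ j); rewrite c0_quad e0_quad /= ?gE ?hE; quad_norm.
by rewrite ?gA_eq0 => /quad_inj[_ _ <-]; ring.
Qed.

Lemma hB_rec j : (hA j * hf 1 + hB j) * (2 * hB 1) -
  (2 * (hA 1 + gB 1) * hf j + (2 * hB 1 + gB 1)) * hB j = hB (1 + j).
Proof.
move: (IG1_succ j); rewrite c0_quad e0_quad /= ?gE ?hE; quad_norm.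
by rewrite ?gA_eq0 => /quad_inj[_ _ <-]; ring.
Qed.

Lemma gBN1_gB1 : gB (-1) * gB 1 = 1.
Proof.
have rec := gB_rec (-1); rewrite addrN gB0 in rec.
have gh1 := gB_hA 1; rewrite expr1z in gh1.
apply: (lincomb_eq2 rec gh1 (k := 1/2) (k' := -1/2)).
by rewrite halfN /Defs.half; field.
Qed.

Lemma hA1 : hA 1 = - gB 1.
Proof.
have gh1 := gB_hA 1; rewrite expr1z in gh1.
by apply: (lincomb_eq2 gh1 gBN1_gB1 (k := gB 1) (k' := - hA 1)); ring.
Qed.

Lemma gB1_neq0 : gB 1 != 0.
Proof. by apply: contra_eq_neq gBN1_gB1 => ->; rewrite mulr0 eq_sym oner_neq0. Qed.

Lemma gB_exp j : gB j = gB 1 ^ j.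
Proof.
have gB_succ i : gB (1 + i) = gB 1 * gB i by rewrite -gB_rec hA1; ring.
elim/int_ind_succ: j => [|j IHj|j]; first by rewrite expr0z gB0.
  by rewrite gB_succ IHj expfzDr ?gB1_neq0 // expr1z.
by rewrite gB_succ expfzDr ?gB1_neq0 // expr1z => /(mulfI gB1_neq0).
Qed.

Lemma hA_exp j : hA j = sgn j * gB 1 ^ j.
Proof.
have := gB_hA j; rewrite gB_exp => ghj.
have inv : gB 1 ^ j * gB 1 ^ (- j) = 1 by rewrite -expfzDr ?gB1_neq0 // subrr expr0z.
by rewrite -[hA j]mul1r -{1}inv -mulrA ghj mulrC.
Qed.

Lemma hB_exp j : hB j = sgn j * gB 1 ^ j * (j%:~R * (- hB 1 / gB 1)).
Proof.
have hB_succ i : hB (1 + i) = hA i * hB 1 - gB 1 * hB i.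
  by rewrite -hB_rec hA1 /Defs.half; field.
have gB1 := gB1_neq0.
elim/int_ind_succ: j => [|j IHj|j]; first by rewrite hB0; ring.
  by rewrite hB_succ IHj hA_exp signzS expfzDr // expr1z intrD; field.
rewrite hB_succ hA_exp signzS expfzDr // expr1z intrD => e.
by apply: (mulfI gB1); apply: (lincomb_eq1 e (k := -1)); field.
Qed.

Theorem gh_closed_form : exists gam al : C, gam != 0 /\ closed_form_G g h gam al.
Proof.
exists (gB 1), (- hB 1 / gB 1); split=> [|j]; first exact: gB1_neq0.
rewrite gE hE gA_eq0 gB_exp hA_exp hB_exp /quad !scale0r !add0r; split=> //.
by rewrite scalerDr -!mul_polyC !rmorphM; ring.
Qed.

End GSystem.

Section PolyAct.
Variables (F : fieldType) (U : lmodType F) (f : {linear U -> U}).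
Implicit Types (p q : {poly F}) (u : U).

Lemma polyact_widen n p u : (size p <= n)%N ->
  polyact f p u = \sum_(i < n) p`_i *: iter i f u.
Proof.
move=> sp; rewrite /polyact (big_ord_widen n (fun i => p`_i *: iter i f u) sp).
rewrite big_mkcond; apply: eq_bigr => i _.
by case: ifP => // /negbT; rewrite -leqNgt => ?; rewrite nth_default // scale0r.
Qed.

Lemma polyactDl p q u : polyact f (p + q) u = polyact f p u + polyact f q u.
Proof.
set n := maxn (size p) (size q).
rewrite (@polyact_widen n p) ?leq_maxl // (@polyact_widen n q) ?leq_maxr //.
rewrite (@polyact_widen n) ?(leq_trans (size_polyD p q)) // -big_split /=.
by apply: eq_bigr => i _; rewrite coefD scalerDl.
Qed.

Lemma polyactZl a p u : polyact f (a *: p) u = a *: polyact f p u.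
Proof.
rewrite (@polyact_widen (size p)) ?size_scale_leq // scaler_sumr.
by apply: eq_bigr => i _; rewrite coefZ scalerA.
Qed.

Lemma polyact0 u : polyact f 0 u = 0.
Proof. by rewrite (@polyact_widen 0) ?size_poly0 // big_ord0. Qed.

Lemma polyactBl p q u : polyact f (p - q) u = polyact f p u - polyact f q u.
Proof. by rewrite polyactDl -[- q]scaleN1r polyactZl scaleN1r. Qed.

Lemma linear_iterD i u v : iter i f (u + v) = iter i f u + iter i f v.
Proof. by elim: i => //= i ->; rewrite linearD. Qed.

Lemma linear_iterZ i a u : iter i f (a *: u) = a *: iter i f u.
Proof. by elim: i => //= i ->; rewrite linearZ. Qed.

Lemma polyactDr p u v : polyact f p (u + v) = polyact f p u + polyact f p v.
Proof.
rewrite /polyact -big_split /=; apply: eq_bigr => i _.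
by rewrite linear_iterD scalerDr.
Qed.

Lemma polyactZr p a u : polyact f p (a *: u) = a *: polyact f p u.
Proof.
rewrite /polyact scaler_sumr; apply: eq_bigr => i _.
by rewrite linear_iterZ !scalerA mulrC.
Qed.

Lemma polyactC a u : polyact f a%:P u = a *: u.
Proof. by rewrite (@polyact_widen 1) ?size_polyC_leq1 // big_ord1 coefC. Qed.

Lemma polyact1 u : polyact f 1 u = u.
Proof. by rewrite -polyC1 polyactC scale1r. Qed.

Lemma polyactMX p u : polyact f (p * 'X) u = polyact f p (f u).
Proof.
rewrite (@polyact_widen (size p).+1); last first.
  by have [->|p0] := eqVneq p 0; rewrite ?mul0r ?size_poly0 ?size_mulX.
rewrite big_ord_recl coefMX /= scale0r add0r.
by apply: eq_bigr => i _; rewrite coefMX /= -iterSr.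
Qed.

Lemma polyactX u : polyact f 'X u = f u.
Proof. by rewrite -['X]mul1r polyactMX polyact1. Qed.

Lemma polyact_comm p u : f (polyact f p u) = polyact f p (f u).
Proof.
rewrite /polyact linear_sum; apply: eq_bigr => i _.
by rewrite linearZ /= -iterS iterSr.
Qed.

Lemma polyactM p q u : polyact f (p * q) u = polyact f p (polyact f q u).
Proof.
elim/poly_ind: p u => [|p a IHp] u; first by rewrite mul0r !polyact0.
rewrite mulrDl mulrAC !polyactDl mul_polyC polyactZl !polyactMX IHp polyactC.
by rewrite polyact_comm.
Qed.

Definition polyact_at u p := polyact f p u.

Lemma polyact_at_linear u : linear (polyact_at u).
Proof. by move=> a p q; rewrite /polyact_at polyactDl polyactZl. Qed.

HB.instance Definition _ u :=
  GRing.isLinear.Build F {poly F} U *:%R (polyact_at u) (polyact_at_linear u).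

End PolyAct.

Section LinearInverse.
Variables (R : pzRingType) (U W : lmodType R) (f : {linear U -> W}) (g : W -> U).
Hypotheses (fK : cancel f g) (gK : cancel g f).

Definition linear_inv of cancel f g & cancel g f := g.

HB.instance Definition _ :=
  GRing.isLinear.Build R W U *:%R (linear_inv fK gK) (can2_linear fK gK).

End LinearInverse.

Section Intertwining.
Variables (C : numClosedFieldType) (U W : lmodType C).
Variables (A : {linear U -> U}) (B : {linear W -> W}) (T : {linear U -> W}) (c : C).
Hypothesis TA : forall u, T (A u) = B (T u) + c *: T u.

Lemma polyact_intertwine p u : T (polyact A p u) = polyact B (shift p c) (T u).
Proof.
elim/poly_ind: p u => [|p a IHp] u.
  by rewrite polyact0 linear0 -polyC0 shiftC polyC0 polyact0.
rewrite polyactDl polyactMX polyactC linearD linearZ /= IHp TA.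
rewrite shiftD shiftM shiftX shiftC mulrDr [_ * c%:P]mulrC mul_polyC.
by rewrite !polyactDl polyactMX polyactZl polyactC polyactDr polyactZr.
Qed.

Lemma polyact_intertwine_coord p u w (psi : W -> {poly C}) :
  (forall y, polyact B (psi y) w = y) ->
  T (polyact A p u) = polyact B (shift p c * psi (T u)) w.
Proof. by move=> psiK; rewrite polyact_intertwine polyactM psiK. Qed.

End Intertwining.

Section SideRelations.
Variables (C : numClosedFieldType) (U W : lmodType C).
Variables (L : int -> {linear U -> U}) (L' : int -> {linear W -> W}).
Variables (I : int -> {linear U -> U}) (I' : int -> {linear W -> W}).
Variables (G : int -> {linear U -> W}) (G' : int -> {linear W -> U}).
Hypothesis rels : side_rels L L' I I' G G'.
Local Notation hf := (Defs.half C).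

Lemma side_rels_G_L0 j x : G j (L 0 x) = L' 0 (G j x) + hf j *: G j x.
Proof.
have [_ [_ [LG _]]] := rels; have := LG 0 j x.
rewrite mulr0 !add0r intrN mulNr scaleNr => e.
by rewrite -[G j _](subKr (L' 0 (G j x))) e opprK.
Qed.

Lemma side_rels_L_L0 m x : L m (L 0 x) = L 0 (L m x) + m%:~R *: L m x.
Proof.
have [LL _] := rels; have := LL m 0 x.
by rewrite ?subr0 ?addr0 => <-; rewrite subrKC.
Qed.

Lemma side_rels_I_L0 k x : I k (L 0 x) = L 0 (I k x) + hf (2 * k + 1) *: I k x.
Proof.
have [_ [LI _]] := rels; have := LI 0 k x.
rewrite add0r scaleNr => e.
by rewrite -[I k _](subKr (L 0 (I k x))) e opprK.
Qed.

End SideRelations.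

(* [phi0] and [phi1] are the coordinate isomorphisms [C[x] -> V0] and
   [C[x] -> V1] on the generators [v] and [w = G_0 v], with inverses [psi0] and
   [psi1]; by [polyact_intertwine], each operator X acts in these coordinates as
   [p |-> shift p c * polX]. *)
Section Coordinates.
Variables (C : numClosedFieldType) (V : tmodule C) (v : tV0 V).
Local Notation hf := (Defs.half C).
Local Notation L0 := (tL0 V). Local Notation L1 := (tL1 V).
Local Notation I0 := (tI0 V). Local Notation I1 := (tI1 V).
Local Notation G01 := (tG01 V). Local Notation G10 := (tG10 V).
Local Notation w := (G01 0 v).
Local Notation phi0 p := (polyact (L0 0) p v).
Local Notation phi1 p := (polyact (L1 0) p w).

Lemma G01_polyact p : G01 0 (phi0 p) = phi1 p.
Proof.
rewrite (@polyact_intertwine _ _ _ (L0 0) (L1 0) (G01 0) 0) ?shift0 // => x.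
by rewrite (side_rels_G_L0 (trels0 V)) /Defs.half mul0r scale0r addr0.
Qed.

Variables (psi0 : tV0 V -> {poly C}) (psi1 : tV1 V -> {poly C}).
Hypothesis phi0K : forall p, psi0 (phi0 p) = p.
Hypothesis psi0K : forall x, phi0 (psi0 x) = x.
Hypothesis phi1K : forall p, psi1 (phi1 p) = p.
Hypothesis psi1K : forall y, phi1 (psi1 y) = y.

Definition polG0 j := psi1 (G01 j v).
Definition polG1 j := psi0 (G10 j w).
Definition polL0 m := psi0 (L0 m v).
Definition polL1 m := psi1 (L1 m w).
Definition polI0 k := psi0 (I0 k v).
Definition polI1 k := psi1 (I1 k w).

Lemma G01_coord j p : G01 j (phi0 p) = phi1 (shift p (hf j) * polG0 j).
Proof. by apply: polyact_intertwine_coord => // x; rewrite (side_rels_G_L0 (trels0 V)). Qed.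
Lemma G10_coord j p : G10 j (phi1 p) = phi0 (shift p (hf j) * polG1 j).
Proof. by apply: polyact_intertwine_coord => // x; rewrite (side_rels_G_L0 (trels1 V)). Qed.
Lemma L0_coord m p : L0 m (phi0 p) = phi0 (shift p m%:~R * polL0 m).
Proof. by apply: polyact_intertwine_coord => // x; rewrite (side_rels_L_L0 (trels0 V)). Qed.
Lemma L1_coord m p : L1 m (phi1 p) = phi1 (shift p m%:~R * polL1 m).
Proof. by apply: polyact_intertwine_coord => // x; rewrite (side_rels_L_L0 (trels1 V)). Qed.
Lemma I0_coord k p : I0 k (phi0 p) = phi0 (shift p (hf (2 * k + 1)) * polI0 k).
Proof. by apply: polyact_intertwine_coord => // x; rewrite (side_rels_I_L0 (trels0 V)). Qed.
Lemma I1_coord k p : I1 k (phi1 p) = phi1 (shift p (hf (2 * k + 1)) * polI1 k).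
Proof. by apply: polyact_intertwine_coord => // x; rewrite (side_rels_I_L0 (trels1 V)). Qed.

Lemma phi0_inj : injective (fun p => phi0 p).
Proof. exact: can_inj phi0K. Qed.
Lemma phi1_inj : injective (fun p => phi1 p).
Proof. exact: can_inj phi1K. Qed.

Lemma GG_even0 j l n : j + l = 2 * n ->
  shift (polG0 l) (hf j) * polG1 j + shift (polG0 j) (hf l) * polG1 l
  = ((-1) ^ j * 2) *: polL0 n.
Proof.
have [_ [_ [_ [_ [_ [GG _]]]]]] := trels0 V.
by move=> e; apply: phi0_inj; rewrite polyactDl polyactZl -!G10_coord !psi1K psi0K; exact: GG.
Qed.
Lemma GG_odd0 j l k : j + l = 2 * k + 1 ->
  shift (polG0 l) (hf j) * polG1 j + shift (polG0 j) (hf l) * polG1 l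
  = ((-1) ^ (j + 1) * ((j - l)%:~R / 2)) *: polI0 k.
Proof.
have [_ [_ [_ [_ [_ [_ GG]]]]]] := trels0 V.
by move=> e; apply: phi0_inj; rewrite polyactDl polyactZl -!G10_coord !psi1K psi0K; exact: GG.
Qed.
Lemma GG_even1 j l n : j + l = 2 * n ->
  shift (polG1 l) (hf j) * polG0 j + shift (polG1 j) (hf l) * polG0 l
  = ((-1) ^ j * 2) *: polL1 n.
Proof.
have [_ [_ [_ [_ [_ [GG _]]]]]] := trels1 V.
by move=> e; apply: phi1_inj; rewrite polyactDl polyactZl -!G01_coord !psi0K psi1K; exact: GG.
Qed.
Lemma GG_odd1 j l k : j + l = 2 * k + 1 ->
  shift (polG1 l) (hf j) * polG0 j + shift (polG1 j) (hf l) * polG0 l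
  = ((-1) ^ (j + 1) * ((j - l)%:~R / 2)) *: polI1 k.
Proof.
have [_ [_ [_ [_ [_ [_ GG]]]]]] := trels1 V.
by move=> e; apply: phi1_inj; rewrite polyactDl polyactZl -!G01_coord !psi0K psi1K; exact: GG.
Qed.
Lemma IG0 k j : shift (polG0 j) (hf (2 * k + 1)) * polI1 k - shift (polI0 k) (hf j) * polG0 j
  = polG0 (2 * k + 1 + j).
Proof.
have [_ [_ [_ [_ [IG _]]]]] := trels0 V.
by apply: phi1_inj; rewrite polyactBl -I1_coord -G01_coord !psi1K psi0K IG.
Qed.
Lemma IG1 k j : shift (polG1 j) (hf (2 * k + 1)) * polI0 k - shift (polI1 k) (hf j) * polG1 j
  = polG1 (2 * k + 1 + j).
Proof.
have [_ [_ [_ [_ [IG _]]]]] := trels1 V.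
by apply: phi0_inj; rewrite polyactBl -I0_coord -G10_coord !psi0K psi1K IG.
Qed.

Lemma polG0_0 : polG0 0 = 1.
Proof.
have v1 : v = phi0 1 by rewrite polyact1.
by rewrite /polG0 {1}v1 G01_polyact phi1K.
Qed.
Lemma polL0_0 : polL0 0 = 'X.
Proof. by rewrite /polL0 -(polyactX (L0 0) v) phi0K. Qed.
Lemma polL1_0 : polL1 0 = 'X.
Proof. by rewrite /polL1 -(polyactX (L1 0) w) phi1K. Qed.
Lemma polG1_0 : polG1 0 = 'X.
Proof.
have := GG_even0 (j := 0) (l := 0) (n := 0) (erefl _).
rewrite polG0_0 half0 shift0 mul1r polL0_0 expr0z mul1r -mulr2n -scaler_nat.
by move/scalerI; apply; rewrite pnatr_eq0.
Qed.

Lemma polL0_polG m : 2 *: polL0 m = polG0 (2 * m) * 'X + polG1 (2 * m).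
Proof.
have := GG_even0 (j := 0) (l := 2 * m) (n := m) (add0r _).
by rewrite half0 shift0 polG1_0 polG0_0 shift1 mul1r expr0z mul1r mulrC => <-.
Qed.

Lemma polL1_polG m :
  2 *: polL1 m = polG1 (2 * m) + shift 'X (hf (2 * m)) * polG0 (2 * m).
Proof.
have := GG_even1 (j := 0) (l := 2 * m) (n := m) (add0r _).
by rewrite half0 shift0 polG1_0 polG0_0 mulr1 expr0z mul1r => <-.
Qed.

Lemma polI0_polG k : hf (2 * k + 1) *: polI0 k = polG0 (2 * k + 1) * 'X + polG1 (2 * k + 1).
Proof.
have := GG_odd0 (j := 0) (l := 2 * k + 1) (k := k) (add0r _).
rewrite half0 shift0 polG1_0 polG0_0 shift1 mul1r mulrC => ->.
by congr (_ *: _); rewrite /Defs.half add0r expr1z sub0r intrN; field.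
Qed.

Lemma polI1_polG k : hf (2 * k + 1) *: polI1 k
  = polG1 (2 * k + 1) + shift 'X (hf (2 * k + 1)) * polG0 (2 * k + 1).
Proof.
have := GG_odd1 (j := 0) (l := 2 * k + 1) (k := k) (add0r _).
rewrite half0 shift0 polG1_0 polG0_0 mulr1 => ->.
by congr (_ *: _); rewrite /Defs.half add0r expr1z sub0r intrN; field.
Qed.

Lemma GG_diag0 j : 2 *: (shift (polG0 j) (hf j) * polG1 j)
  = (-1) ^ j *: (polG0 (2 * j) * 'X + polG1 (2 * j)).
Proof.
have jj : j + j = 2 * j by ring.
have := GG_even0 jj.
by rewrite -polL0_polG scalerA scaler_nat mulr2n => <-.
Qed.

Lemma GG_diag1 j : 2 *: (shift (polG1 j) (hf j) * polG0 j)
  = (-1) ^ j *: (polG1 (2 * j) + shift 'X (hf (2 * j)) * polG0 (2 * j)).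
Proof.
have jj : j + j = 2 * j by ring.
have := GG_even1 jj.
by rewrite -polL1_polG scalerA scaler_nat mulr2n => <-.
Qed.

Lemma GG_odd_diag0 k : let j := 1 + 2 * k in
  shift (polG0 (- j)) (hf (2 * j)) * polG1 (2 * j)
  + shift (polG0 (2 * j)) (hf (- j)) * polG1 (- j)
  = (-3) *: (polG0 j * 'X + polG1 j).
Proof.
move=> j; rewrite (GG_odd0 (k := k)); last by rewrite /j; ring.
rewrite /j (addrC 1 (2 * k)) -polI0_polG scalerA; congr (_ *: _).
by rewrite (addrC (2 * (2 * k + 1)) 1) signz_odd /Defs.half !intrD !intrM !intrN; field.
Qed.

Lemma polG_closed_form : exists gam al : C, gam != 0 /\ closed_form_G polG0 polG1 gam al.
Proof.
apply: (gh_closed_form (c0 := polI0 0) (e0 := polI1 0)).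
- exact: polG0_0.
- exact: polG1_0.
- by move=> j; rewrite -polL0_0; apply: GG_even0; rewrite subrr mulr0.
- by move=> j; rewrite -polL1_0; apply: GG_even1; rewrite subrr mulr0.
- exact: GG_diag0.
- exact: GG_diag1.
- exact: GG_odd_diag0.
- by move=> j; have := IG0 0 j; rewrite mulr0 !add0r.
- by move=> j; have := IG1 0 j; rewrite mulr0 !add0r.
- by have := polI0_polG 0; rewrite mulr0 add0r.
- by have := polI1_polG 0; rewrite mulr0 add0r.
Qed.

Section ClosedForm.
Variables (gam al : C).
Hypothesis polG_gam : closed_form_G polG0 polG1 gam al.

Lemma polL0_closed m : polL0 m = gam ^ (2 * m) *: ('X + (m%:~R * al)%:P).
Proof.
apply: (@scalerI _ _ 2); first by rewrite pnatr_eq0.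
rewrite polL0_polG; have [-> ->] := polG_gam (2 * m); rewrite signz_even mul1r.
by rewrite -!mul_polyC intrM rmorphM; ring.
Qed.

Lemma polL1_closed m : polL1 m = gam ^ (2 * m) *: ('X + (m%:~R * (al + 2^-1))%:P).
Proof.
apply: (@scalerI _ _ 2); first by rewrite pnatr_eq0.
rewrite polL1_polG; have [-> ->] := polG_gam (2 * m).
rewrite signz_even mul1r shiftX half_double.
by quad_norm; congr quad; field.
Qed.

Lemma polI0_closed k : polI0 k = (-2 * gam ^ (2 * k + 1) * al)%:P.
Proof.
apply: (scalerI (half_odd_neq0 C k)).
rewrite polI0_polG; have [-> ->] := polG_gam (2 * k + 1).
rewrite (addrC _ 1) signz_odd.
by rewrite /Defs.half; quad_norm; congr quad; field.
Qed.

Lemma polI1_closed k : polI1 k = (gam ^ (2 * k + 1) * (1 - 2 * al))%:P.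
Proof.
apply: (scalerI (half_odd_neq0 C k)).
rewrite polI1_polG; have [-> ->] := polG_gam (2 * k + 1).
rewrite (addrC _ 1) signz_odd shiftX.
by rewrite /Defs.half; quad_norm; congr quad; field.
Qed.

End ClosedForm.

Lemma iso_Mt_of_closed_form gam al t lam : closed_form_G polG0 polG1 gam al ->
  (t = 1 \/ t = -1) -> gam = t * sqrtC lam -> iso_Mt V t lam al.
Proof.
move=> polG_gam t_sign gamE; set s := sqrtC lam.
have t_even k : t ^ (2 * k) = 1 by case: t_sign => ->; rewrite ?exp1rz ?signz_even.
have gam_exp k : gam ^ k = t ^ k * s ^ k by rewrite gamE expfzMl.
have gam_even k : gam ^ (2 * k) = s ^ (2 * k) by rewrite gam_exp t_even mul1r.
have Nt_exp k : (- t) ^ k = (-1) ^ k * t ^ k by rewrite -mulN1r expfzMl.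
exists (linear_inv (f := polyact_at (L0 0) v) phi0K psi0K),
  (linear_inv (f := polyact_at (L1 0) w) phi1K psi1K); split.
- by exists (polyact_at (L0 0) v) => x; [apply: psi0K | apply: phi0K].
- by exists (polyact_at (L1 0) w) => x; [apply: psi1K | apply: phi1K].
- move=> m x; rewrite -[x]psi0K /= /linear_inv L0_coord !phi0K (polL0_closed polG_gam).
  by rewrite /ML0 /lpow -/s -gam_even -!mul_polyC; ring.
- move=> m x; rewrite -[x]psi1K /= /linear_inv L1_coord !phi1K (polL1_closed polG_gam).
  by rewrite /ML1 /lpow -/s -gam_even -!mul_polyC; ring.
split.
- move=> k x; rewrite -[x]psi0K /= /linear_inv I0_coord !phi0K (polI0_closed polG_gam).
  by rewrite /MI0 /lpow -/s gam_exp -!mul_polyC; ring.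
- move=> k x; rewrite -[x]psi1K /= /linear_inv I1_coord !phi1K (polI1_closed polG_gam).
  by rewrite /MI1 /lpow -/s gam_exp -!mul_polyC; ring.
- move=> j x; rewrite -[x]psi0K /= /linear_inv G01_coord !phi1K !phi0K.
  have [-> _] := polG_gam j.
  by rewrite /MG01 /lpow -/s gam_exp -!mul_polyC; ring.
- move=> j x; rewrite -[x]psi1K /= /linear_inv G10_coord !phi0K !phi1K.
  have [_ ->] := polG_gam j.
  by rewrite /MG10 /lpow -/s gam_exp Nt_exp -!mul_polyC; ring.
Qed.

End Coordinates.

Lemma sqrtC_sqr_sign (C : numClosedFieldType) (x : C) :
  exists2 t : C, t = 1 \/ t = -1 & x = t * sqrtC (x ^+ 2).
Proof.
have : (sqrtC (x ^+ 2) - x) * (sqrtC (x ^+ 2) + x) == 0.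
  by rewrite -subr_sqr sqrtCK subrr.
rewrite mulf_eq0 => /orP [|] /eqP e.
  by exists 1; [left | apply/eqP; rewrite mul1r eq_sym -subr_eq0 e].
by exists (-1); [right | apply/eqP; rewrite mulN1r -addr_eq0 addrC e].
Qed.

Lemma Uh_free1_even_iso_Mt (C : numClosedFieldType) (V : tmodule C) :
  Uh_free1_even V -> exists lam al : C, lam != 0 /\
    (iso_Mt V 1 lam al \/ iso_Mt V (-1) lam al).
Proof.
case=> v [[psi0 phi0K psi0K] [psi1 phi1K' psi1K']].
have phi1K p : psi1 (polyact (tL1 V 0) p (tG01 V 0 v)) = p.
  by rewrite -G01_polyact phi1K'.
have psi1K y : polyact (tL1 V 0) (psi1 y) (tG01 V 0 v) = y.
  by rewrite -G01_polyact psi1K'.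
have [gam [al [gam0 polG_gam]]] := polG_closed_form phi0K psi0K phi1K psi1K.
exists (gam ^+ 2), al; split; first by rewrite expf_neq0.
have [t t_sign gamE] := sqrtC_sqr_sign gam.
have := iso_Mt_of_closed_form phi0K psi0K phi1K psi1K polG_gam t_sign gamE.
by case: t_sign => ->; [left | right].
Qed.

Theorem theorem3p3 (R : realType) (V : tmodule R[i]) :
  Uh_free1 V ->
  exists lam al : R[i], lam != 0 /\
    [\/ iso_Mt V 1 lam al, iso_Mt V (-1) lam al,
        iso_Mt (Pi V) 1 lam al | iso_Mt (Pi V) (-1) lam al].
Proof.
case=> /Uh_free1_even_iso_Mt [lam [al [lam0 iso]]]; exists lam, al; split=> //.
  by case: iso; [exact: Or41 | exact: Or42].
by case: iso; [exact: Or43 | exact: Or44].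
Qed.
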